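(* Fix parameters $0<\varepsilon<f<(1+\varepsilon)/2<1$ and $\sigma>0$. Let $pqr$ be a non-degenerate triangle in $\mathbb{R}^2$ with one of its vertices designated as apex and an ordering of the two other (base) vertices, and let $\tau(p),\tau(q),\tau(r)$ be real values with $\tau(p)\le\tau(q)\le\tau(r)$ such that $\|\nabla\tau\|<\sigma$ and the triangle satisfies the adaptive progress constraint $\sigma$. Let $d_p:=\operatorname{dist}(p,\operatorname{aff}(qr))$. Then for every $\delta\in[0,\varepsilon\,\sigma\,d_p]$, the affine function $\tau'$ with $\tau'(p)=\tau(p)+\delta$, $\tau'(q)=\tau(q)$, $\tau'(r)=\tau(r)$ satisfies $\|\nabla\tau'\|<\sigma$.
   Context: Values at the vertices of a triangle are extended to the unique affine function on $\mathbb{R}^2$, also denoted $\tau$; $\nabla\tau$ is its gradient. Diminished width: for a triangle written $abc$ with its apex listed first (here $a$), $\mathrm{dw}(abc):=\min\{(1-\varepsilon)\operatorname{dist}(a,\operatorname{aff}(bc)),\,(1-f)\operatorname{dist}(b,\operatorname{aff}(ac)),\,(1-f)\operatorname{dist}(c,\operatorname{aff}(ab))\}$ (symmetric in $b,c$). Adaptive progress constraint $\sigma$: for a triangle with apex $a$ and base vertices $b,c$ (in the given order), let $d$ be the midpoint of $bc$ and $e$ the midpoint of $ac$, with $\tau(d),\tau(e)$ the values of the affine function there; the triangle satisfies the constraint iff $|\tau(a)-\tau(b)|\le 2\,\mathrm{dw}(dca)\,\sigma$, $|\tau(a)-\tau(d)|\le\mathrm{dw}(abc)\,\sigma$, $|\tau(a)-\tau(c)|\le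 2\,\mathrm{dw}(dab)\,\sigma$, and $|\tau(b)-\tau(c)|\le 4\,\mathrm{dw}(ead)\,\sigma$ (in each $\mathrm{dw}$ the first-listed vertex is the apex of that smaller triangle). *)

From Stdlib Require Import Reals Lra.
Open Scope R_scope.

Definition pt := (R * R)%type.

Definition vsub (x y : pt) : pt := (fst x - fst y, snd x - snd y).
Definition dot (u v : pt) : R := fst u * fst v + snd u * snd v.
Definition cross (u v : pt) : R := fst u * snd v - snd u * fst v.
Definition vnorm (u : pt) : R := sqrt (dot u u).
Definition midpoint (x y : pt) : pt := ((fst x + fst y) / 2, (snd x + snd y) / 2).

(* twice the signed area; the triangle abc is non-degenerate iff this is nonzero *)
Definition area2 (a b c : pt) : R := cross (vsub b a) (vsub c a).

(* Gradient of the unique affine function on R^2 taking values ta, tb, tc at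
   the vertices a, b, c of a non-degenerate triangle (Cramer's rule):
   it is the unique g with g.(b-a) = tb-ta and g.(c-a) = tc-ta. *)
Definition grad (a b c : pt) (ta tb tc : R) : pt :=
  let D := area2 a b c in
  let u := vsub b a in let v := vsub c a in
  (((tb - ta) * snd v - (tc - ta) * snd u) / D,
   ((tc - ta) * fst u - (tb - ta) * fst v) / D).

Definition aff_eval (a b c : pt) (ta tb tc : R) (x : pt) : R :=
  ta + dot (grad a b c ta tb tc) (vsub x a).

(* dist(x, aff(yz)) for y <> z *)
Definition dist_line (x y z : pt) : R :=
  Rabs (cross (vsub z y) (vsub x y)) / vnorm (vsub z y).

Definition dw (eps f : R) (a b c : pt) : R :=
  Rmin ((1 - eps) * dist_line a b c)
       (Rmin ((1 - f) * dist_line b a c) ((1 - f) * dist_line c a b)).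

(* adaptive progress constraint sigma for triangle with apex a, base b, c
   (in this order), with vertex values ta, tb, tc *)
Definition progress (eps f sigma : R) (a b c : pt) (ta tb tc : R) : Prop :=
  let d := midpoint b c in
  let e := midpoint a c in
  let td := aff_eval a b c ta tb tc d in
  Rabs (ta - tb) <= 2 * dw eps f d c a * sigma /\
  Rabs (ta - td) <= dw eps f a b c * sigma /\
  Rabs (ta - tc) <= 2 * dw eps f d a b * sigma /\
  Rabs (tb - tc) <= 4 * dw eps f e a d * sigma.

Definition progress_some_designation (eps f sigma : R) (p q r : pt)
    (tp tq tr : R) : Prop :=
  progress eps f sigma p q r tp tq tr \/ progress eps f sigma p r q tp tr tq \/
  progress eps f sigma q p r tq tp tr \/ progress eps f sigma q r p tq tr tp \/
  progress eps f sigma r p q tr tp tq \/ progress eps f sigma r q p tr tq tp.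

From Stdlib Require Import Reals Lra Psatz.
Open Scope R_scope.

(* Raising the apex value by delta adds delta * grad(lambda_p) to the gradient, where
   lambda_p is the barycentric coordinate of p; grad(lambda_p) = n / h with h the height
   dist(p, aff(qr)) and n the unit normal of the base qr pointing towards p.  In the
   orthonormal frame (base direction, n) write grad tau = (b, a): b = (tr - tq)/|qr| >= 0 is
   the base slope, a the normal slope, and |grad tau'|^2 = (a + t)^2 + b^2 with
   t = delta / h in [0, eps sigma].  As sigma = K + eps sigma with K = (1 - eps) sigma,
   it suffices that (a + t)^2 + b^2 < (K + t)^2 whenever the lift actually lengthens the
   gradient, i.e. whenever a > -t/2 (the predicate [lift_bounded]).
   The progress constraint with apex A bounds |tau(A) - tau(B)| |AC| and
   |tau(A) - tau(C)| |AB| by K |2 area|.  For sorted values this gives, according to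
   whether the designated apex is p, q or r, one of three pairs of inequalities in frame
   coordinates ([edge_bounds]), each implying [lift_bounded] by planar estimates. *)

Definition lift_bounded (K a b : R) : Prop :=
  forall t, 0 < t -> -t/2 < a -> (a + t)^2 + b^2 < (K + t)^2.

(* Reduction of the theorem to [lift_bounded]: for a <= -t/2 the lift shortens the
   gradient, otherwise its length is below K + t <= K + E. *)
Lemma lift_within (K E a b t : R) : 0 < K -> 0 <= t <= E ->
  a^2 + b^2 < (K + E)^2 -> lift_bounded K a b -> (a + t)^2 + b^2 < (K + E)^2.
Proof.
  intros HK Ht Hg Hlift.
  destruct (Req_dec t 0) as [->|Ht0]; [lra|].
  destruct (Rle_or_lt a (-t/2)) as [Hdown|Hup]; [nra|].
  specialize (Hlift t ltac:(lra) Hup). nra.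
Qed.

Lemma lift_bounded_interior (K a b : R) : 0 < K -> a <= 0 -> 0 <= b <= K ->
  lift_bounded K a b.
Proof. intros HK Ha Hb t Ht Hat. nra. Qed.

(* The bound coming from an apex at a base vertex y: with x the abscissa of y relative
   to the foot of the height h, d = |py| and beta = tau(y) - tau(p) = b x - a h, the
   constraints beta <= K h and b d <= K h.  The point (w, b) with w = b x / h lies in
   the disk of radius K and a lies in [w - K, w]. *)
Lemma lift_bounded_side (K h x d a b beta : R) :
  0 < K -> 0 < h -> 0 <= b -> 0 <= d -> d^2 = x^2 + h^2 ->
  beta = b * x - a * h -> 0 <= beta <= K * h -> b * d <= K * h ->
  lift_bounded K a b.
Proof.
  intros HK Hh Hb Hd Hdx Hbeta Hbe Hbd t Ht Hat.
  set (w := b * x / h).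
  assert (Hw : w * h = b * x) by (unfold w; field; lra).
  assert (Haw : a <= w) by nra.
  assert (HwK : w - a <= K) by nra.
  assert (Hdisk : w^2 + b^2 <= K^2).
  { assert (Hbd2 : b^2 * d^2 <= K^2 * h^2).
    { rewrite <- !Rpow_mult_distr. apply pow_incr. split; [nra|lra]. }
    assert (Hwb : (w^2 + b^2) * h^2 = b^2 * d^2).
    { rewrite Hdx. replace ((w^2 + b^2) * h^2) with ((w * h)^2 + b^2 * h^2) by ring.
      rewrite Hw. ring. }
    apply (Rmult_le_reg_r (h^2)); [nra|lra]. }
  assert (HwltK : w < K).
  { destruct (Req_dec b 0) as [Hb0|Hb0].
    - assert (w = 0) by (unfold w; rewrite Hb0; field; lra). lra.
    - nra. }
  destruct (Rle_or_lt 0 (a + w)).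
  - nra.
  - assert (a * (t - K) < t * K) by (destruct (Rle_or_lt K t); nra). nra.
Qed.

Lemma le_of_sq_le (u v : R) : 0 <= v -> u^2 <= v^2 -> u <= v.
Proof. intros Hv Huv. apply Rsqr_incr_0_var; [rewrite !Rsqr_pow2|]; assumption. Qed.

(* The bound coming from the apex p: base [xq, xq + l] on the abscissa axis,
   dq = |pq|, dr = |pr|, beta = tau(q) - tau(p), gamma = tau(r) - tau(p).  If the foot
   of the height lies beyond q (resp. beyond r) the situation reduces to the side bound
   at q (resp. r); if it lies on the base, a <= 0 and b <= K. *)
Lemma lift_bounded_apex (K h l xq dq dr a b beta gamma : R) :
  0 < K -> 0 < h -> 0 < l -> 0 <= dq -> 0 <= dr ->
  dq^2 = xq^2 + h^2 -> dr^2 = (xq + l)^2 + h^2 ->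
  beta = b * xq - a * h -> gamma = beta + b * l -> 0 <= beta -> 0 <= b ->
  beta * dr <= K * l * h -> gamma * dq <= K * l * h ->
  lift_bounded K a b.
Proof.
  intros HK Hh Hl Hdq Hdr Hdqx Hdrx Hbeta Hgamma Hbe Hb Hbdr Hgdq.
  assert (Hbl : b * l * dq <= K * l * h) by nra.
  destruct (Rlt_or_le 0 xq) as [Hq|Hq]; [|destruct (Rlt_or_le (xq + l) 0) as [Hr|Hr]].
  - assert (Hldr : l <= dr) by (apply le_of_sq_le; nra).
    apply (lift_bounded_side K h xq dq a b beta); try lra.
    + split; [lra|]. apply (Rmult_le_reg_r l); nra.
    + apply (Rmult_le_reg_r l); nra.
  - assert (Hldq : l <= dq) by (apply le_of_sq_le; nra).
    assert (Hdrq : dr <= dq) by (apply le_of_sq_le; nra).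
    apply (lift_bounded_side K h (xq + l) dr a b gamma); try lra.
    + assert (Hg0 : 0 <= gamma) by nra.
      split; [lra|]. apply (Rmult_le_reg_r l); [lra|].
      assert (gamma * l <= gamma * dq) by (apply Rmult_le_compat_l; lra). lra.
    + apply (Rmult_le_reg_r l); [lra|].
      assert (b * l * dr <= b * l * dq) by (apply Rmult_le_compat_l; nra). lra.
  - assert (Hhdq : h <= dq) by (apply le_of_sq_le; nra).
    apply lift_bounded_interior; [lra| |split; [lra|]].
    + assert (b * xq <= 0) by (assert (0 <= b * (- xq)) by (apply Rmult_le_pos; lra); lra).
      apply (Rmult_le_reg_r h); lra.
    + assert (b * l * h <= b * l * dq) by (apply Rmult_le_compat_l; nra).
      apply (Rmult_le_reg_r (l * h)); nra.
Qed.

Lemma grad_interpolates (a b c : pt) (ta tb tc : R) : area2 a b c <> 0 ->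
  dot (grad a b c ta tb tc) (vsub b a) = tb - ta /\
  dot (grad a b c ta tb tc) (vsub c a) = tc - ta.
Proof.
  destruct a as [a1 a2], b as [b1 b2], c as [c1 c2].
  unfold grad, area2, dot, cross, vsub; simpl; intros HD.
  split; field; exact HD.
Qed.

Lemma lagrange_identity (u v : pt) :
  dot u u * dot v v = (dot u v)^2 + (cross u v)^2.
Proof. destruct u, v; unfold dot, cross; simpl; ring. Qed.

(* A vector g is determined by its projections on two independent vectors w and u;
   this expresses |g|^2 through g.u and g.w (used to compute the gradient norm). *)
Lemma two_projections_identity (g w u : pt) :
  dot g g * dot u u * (cross w u)^2 =
  (dot g u)^2 * (cross w u)^2 + (dot g u * dot w u - dot g w * dot u u)^2.
Proof. destruct g, w, u; unfold dot, cross; simpl; ring. Qed.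

Lemma vnorm_sq (u : pt) : vnorm u ^ 2 = dot u u.
Proof. unfold vnorm. rewrite pow2_sqrt; [reflexivity|]. destruct u; unfold dot; simpl; nra. Qed.

Lemma vnorm_lt_iff (u : pt) (s : R) : 0 < s -> (vnorm u < s <-> dot u u < s ^ 2).
Proof.
  intros Hs. rewrite <- vnorm_sq. pose proof (sqrt_pos (dot u u)) as Hn. fold (vnorm u) in Hn.
  split; intros H; [nra|]. destruct (Rlt_or_le (vnorm u) s); [assumption|nra].
Qed.

Lemma vnorm_vsub_comm (x y : pt) : vnorm (vsub x y) = vnorm (vsub y x).
Proof. destruct x, y; unfold vnorm, vsub, dot; simpl. f_equal. ring. Qed.

Lemma dot_vsub_chain (g x y z : pt) :
  dot g (vsub z y) = dot g (vsub z x) - dot g (vsub y x).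
Proof. destruct g, x, y, z; unfold dot, vsub; simpl; ring. Qed.

Lemma vnorm_pos_of_cross (u v : pt) : cross u v <> 0 -> 0 < vnorm u.
Proof.
  intros Huv. unfold vnorm. apply sqrt_lt_R0.
  destruct u as [u1 u2], v as [v1 v2]; unfold cross, dot in *; simpl in *.
  destruct (Rlt_or_le 0 (u1 * u1 + u2 * u2)) as [Hpos|Hle]; [exact Hpos|].
  exfalso. apply Huv.
  assert (u1 = 0) by nra. assert (u2 = 0) by nra. subst. ring.
Qed.

Lemma cross_midpoint_apex (A B C : pt) :
  cross (vsub A C) (vsub (midpoint B C) C) = area2 A B C / 2 /\
  cross (vsub B A) (vsub (midpoint B C) A) = area2 A B C / 2.
Proof. destruct A, B, C; unfold area2, cross, vsub, midpoint; simpl; split; field. Qed.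

Lemma le_mul_of_le_half_height (x c S L : R) : 0 < L ->
  x <= 2 * (c * (Rabs (S / 2) / L)) -> x * L <= c * Rabs S.
Proof.
  intros HL Hx. unfold Rdiv in Hx. rewrite Rabs_mult, (Rabs_pos_eq (/ 2)) in Hx by lra.
  apply (Rmult_le_compat_r L) in Hx; [|lra].
  replace (2 * (c * (Rabs S * / 2 * / L)) * L) with (c * Rabs S) in Hx by (field; lra).
  exact Hx.
Qed.

(* The first and third progress inequalities, with dw bounded by its (1 - eps) term:
   |tau(A) - tau(B)| <= K dist(B, aff AC) and |tau(A) - tau(C)| <= K dist(C, aff AB),
   written without division as products with the edge lengths. *)
Lemma progress_edge_bounds (eps f sigma : R) (A B C : pt) (tA tB tC : R) :
  0 < sigma -> area2 A B C <> 0 ->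
  progress eps f sigma A B C tA tB tC ->
  Rabs (tA - tB) * vnorm (vsub A C) <= (1 - eps) * sigma * Rabs (area2 A B C) /\
  Rabs (tA - tC) * vnorm (vsub B A) <= (1 - eps) * sigma * Rabs (area2 A B C).
Proof.
  intros Hs HD [HAB [_ [HAC _]]].
  destruct (cross_midpoint_apex A B C) as [HmC HmA].
  assert (HlenAC : 0 < vnorm (vsub A C)).
  { apply (vnorm_pos_of_cross _ (vsub (midpoint B C) C)). rewrite HmC. lra. }
  assert (HlenBA : 0 < vnorm (vsub B A)).
  { apply (vnorm_pos_of_cross _ (vsub (midpoint B C) A)). rewrite HmA. lra. }
  assert (HdwC : dw eps f (midpoint B C) C A
                 <= (1 - eps) * (Rabs (area2 A B C / 2) / vnorm (vsub A C)))
    by (rewrite <- HmC; apply Rmin_l).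
  assert (HdwA : dw eps f (midpoint B C) A B
                 <= (1 - eps) * (Rabs (area2 A B C / 2) / vnorm (vsub B A)))
    by (rewrite <- HmA; apply Rmin_l).
  split; apply le_mul_of_le_half_height; try lra.
  - apply (Rle_trans _ (2 * dw eps f (midpoint B C) C A * sigma)); [exact HAB|].
    apply (Rmult_le_compat_r sigma) in HdwC; lra.
  - apply (Rle_trans _ (2 * dw eps f (midpoint B C) A B * sigma)); [exact HAC|].
    apply (Rmult_le_compat_r sigma) in HdwA; lra.
Qed.

(* The orthonormal frame attached to the base qr of the triangle pqr: the base length,
   the abscissa along qr of a point y measured from the foot of the height from p, and
   the two components of the gradient of the affine interpolant. *)
Definition base_len (q r : pt) : R := vnorm (vsub r q).
Definition foot (p q r y : pt) : R := dot (vsub y p) (vsub r q) / base_len q r.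
Definition base_slope (q r : pt) (tq tr : R) : R := (tr - tq) / base_len q r.
Definition normal_slope (p q r : pt) (tp tq tr : R) : R :=
  (base_slope q r tq tr * foot p q r q - (tq - tp)) / dist_line p q r.

Section Frame.

Variables p q r : pt.
Hypothesis nondegenerate : area2 p q r <> 0.

Lemma cross_edges_base :
  cross (vsub q p) (vsub r q) = area2 p q r /\ cross (vsub r p) (vsub r q) = area2 p q r.
Proof. destruct p, q, r; unfold area2, cross, vsub; simpl; split; ring. Qed.

Lemma base_len_pos : 0 < base_len q r.
Proof.
  apply (vnorm_pos_of_cross _ (vsub p q)).
  replace (cross (vsub r q) (vsub p q)) with (area2 p q r)
    by (destruct p, q, r; unfold area2, cross, vsub; simpl; ring).
  exact nondegenerate.
Qed.

Lemma area2_base_height : Rabs (area2 p q r) = base_len q r * dist_line p q r.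
Proof.
  pose proof base_len_pos as Hl.
  unfold dist_line. fold (base_len q r).
  replace (cross (vsub r q) (vsub p q)) with (area2 p q r)
    by (destruct p, q, r; unfold area2, cross, vsub; simpl; ring).
  field. lra.
Qed.

Lemma height_pos : 0 < dist_line p q r.
Proof.
  pose proof base_len_pos as Hl. pose proof area2_base_height as Hah.
  pose proof (Rabs_pos_lt _ nondegenerate). nra.
Qed.

Lemma foot_r : foot p q r r = foot p q r q + base_len q r.
Proof.
  pose proof base_len_pos as Hl.
  unfold foot.
  replace (dot (vsub r p) (vsub r q)) with (dot (vsub q p) (vsub r q) + base_len q r ^ 2).
  - field. lra.
  - unfold base_len. rewrite vnorm_sq. destruct p, q, r; unfold dot, vsub; simpl; ring.
Qed.

Lemma height_sq : dist_line p q r ^ 2 = area2 p q r ^ 2 / base_len q r ^ 2.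
Proof.
  pose proof base_len_pos as Hl.
  rewrite <- (pow2_abs (area2 p q r)), area2_base_height. field. lra.
Qed.

Lemma edge_len_sq (y : pt) : cross (vsub y p) (vsub r q) = area2 p q r ->
  vnorm (vsub y p) ^ 2 = foot p q r y ^ 2 + dist_line p q r ^ 2.
Proof.
  intros Hcross. pose proof base_len_pos as Hl.
  pose proof (lagrange_identity (vsub y p) (vsub r q)) as Hlag.
  rewrite Hcross, <- (vnorm_sq (vsub r q)) in Hlag. fold (base_len q r) in Hlag.
  rewrite vnorm_sq, height_sq. unfold foot.
  apply (Rmult_eq_reg_r (base_len q r ^ 2)); [|apply pow_nonzero; lra].
  rewrite Hlag. field. lra.
Qed.

Lemma grad_norm_frame (tp tq tr : R) :
  dot (grad p q r tp tq tr) (grad p q r tp tq tr) =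
  normal_slope p q r tp tq tr ^ 2 + base_slope q r tq tr ^ 2.
Proof.
  destruct (grad_interpolates p q r tp tq tr nondegenerate) as [Hgq Hgr].
  set (g := grad p q r tp tq tr) in *.
  set (a := normal_slope p q r tp tq tr). set (b := base_slope q r tq tr).
  set (l := base_len q r). set (h := dist_line p q r). set (D := area2 p q r).
  pose proof base_len_pos as Hl. pose proof height_pos as Hh. fold l h in Hl, Hh.
  assert (HgU : dot g (vsub r q) = tr - tq).
  { replace (tr - tq) with ((tr - tp) - (tq - tp)) by ring. rewrite <- Hgq, <- Hgr.
    apply dot_vsub_chain. }
  assert (Hll : dot (vsub r q) (vsub r q) = l ^ 2)
    by (unfold l, base_len; rewrite vnorm_sq; reflexivity).
  assert (HDhl : Rabs D = l * h) by apply area2_base_height.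
  assert (Hb : b * l = tr - tq) by (unfold b, base_slope; fold l; field; lra).
  assert (Ha : a * (l * Rabs D) = (tr - tq) * dot (vsub q p) (vsub r q) - (tq - tp) * l ^ 2).
  { rewrite HDhl. unfold a, normal_slope, foot, base_slope. fold l h. field. lra. }
  pose proof (two_projections_identity g (vsub q p) (vsub r q)) as Hid.
  rewrite (proj1 cross_edges_base), HgU, Hgq, Hll in Hid. fold D in Hid.
  assert (HD2 : 0 < l ^ 2 * D ^ 2).
  { apply Rmult_lt_0_compat; [apply pow_lt; lra|].
    rewrite <- Rsqr_pow2. apply Rsqr_pos_lt. exact nondegenerate. }
  apply (Rmult_eq_reg_r (l ^ 2 * D ^ 2)); [|lra].
  transitivity ((a * (l * Rabs D)) ^ 2 + (b * l) ^ 2 * D ^ 2).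
  - rewrite Ha, Hb. lra.
  - replace ((a * (l * Rabs D)) ^ 2) with (a ^ 2 * l ^ 2 * Rabs D ^ 2) by ring.
    rewrite pow2_abs. ring.
Qed.

Lemma normal_slope_raise (tp tq tr delta : R) :
  normal_slope p q r (tp + delta) tq tr = normal_slope p q r tp tq tr + delta / dist_line p q r.
Proof. pose proof height_pos. unfold normal_slope. field. lra. Qed.

(* What the progress constraint gives for sorted values, according to whether the
   designated apex is p, q or r. *)
Definition edge_bounds (K : R) (tp tq tr : R) : Prop :=
  let S := K * Rabs (area2 p q r) in
  ((tq - tp) * vnorm (vsub r p) <= S /\ (tr - tp) * vnorm (vsub q p) <= S) \/
  ((tq - tp) * base_len q r <= S /\ (tr - tq) * vnorm (vsub q p) <= S) \/
  ((tr - tp) * base_len q r <= S /\ (tr - tq) * vnorm (vsub r p) <= S).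

Lemma area2_abs_permutations :
  let S := Rabs (area2 p q r) in
  Rabs (area2 p r q) = S /\ Rabs (area2 q p r) = S /\ Rabs (area2 q r p) = S /\
  Rabs (area2 r p q) = S /\ Rabs (area2 r q p) = S.
Proof.
  assert (Hperm : area2 p r q = - area2 p q r /\ area2 q p r = - area2 p q r /\
    area2 q r p = area2 p q r /\ area2 r p q = area2 p q r /\ area2 r q p = - area2 p q r)
    by (destruct p, q, r; unfold area2, cross, vsub; simpl; repeat split; ring).
  destruct Hperm as (H1 & H2 & H3 & H4 & H5).
  rewrite H1, H2, H3, H4, H5, !Rabs_Ropp. repeat split.
Qed.

Lemma designation_edge_bounds (eps f sigma tp tq tr : R) :
  0 < sigma -> tp <= tq -> tq <= tr ->
  progress_some_designation eps f sigma p q r tp tq tr ->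
  edge_bounds ((1 - eps) * sigma) tp tq tr.
Proof.
  intros Hs Hpq Hqr Hprog.
  destruct area2_abs_permutations as (A1 & A2 & A3 & A4 & A5).
  assert (Hbounds : forall (A B C : pt) (tA tB tC : R),
    progress eps f sigma A B C tA tB tC -> Rabs (area2 A B C) = Rabs (area2 p q r) ->
    Rabs (tA - tB) * vnorm (vsub A C) <= (1 - eps) * sigma * Rabs (area2 p q r) /\
    Rabs (tA - tC) * vnorm (vsub B A) <= (1 - eps) * sigma * Rabs (area2 p q r)).
  { intros A B C tA tB tC HABC HA. rewrite <- HA.
    apply (progress_edge_bounds eps f); [exact Hs| |exact HABC].
    intros H0. rewrite H0, Rabs_R0 in HA.
    apply (Rabs_no_R0 _ nondegenerate). symmetry. exact HA. }
  assert (D1 : Rabs (tp - tq) = tq - tp) by (rewrite Rabs_minus_sym; apply Rabs_pos_eq; lra).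
  assert (D2 : Rabs (tp - tr) = tr - tp) by (rewrite Rabs_minus_sym; apply Rabs_pos_eq; lra).
  assert (D3 : Rabs (tq - tr) = tr - tq) by (rewrite Rabs_minus_sym; apply Rabs_pos_eq; lra).
  assert (D4 : Rabs (tq - tp) = tq - tp) by (apply Rabs_pos_eq; lra).
  assert (D5 : Rabs (tr - tp) = tr - tp) by (apply Rabs_pos_eq; lra).
  assert (D6 : Rabs (tr - tq) = tr - tq) by (apply Rabs_pos_eq; lra).
  assert (L1 : vnorm (vsub p q) = vnorm (vsub q p)) by apply vnorm_vsub_comm.
  assert (L2 : vnorm (vsub p r) = vnorm (vsub r p)) by apply vnorm_vsub_comm.
  assert (L3 : vnorm (vsub q r) = base_len q r) by apply vnorm_vsub_comm.
  assert (L4 : vnorm (vsub r q) = base_len q r) by reflexivity.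
  unfold edge_bounds.
  destruct Hprog as [Hc|[Hc|[Hc|[Hc|[Hc|Hc]]]]];
    pose proof (Hbounds _ _ _ _ _ _ Hc) as Hb;
    specialize (Hb ltac:(first [assumption | reflexivity])); destruct Hb as [h1 h2];
    rewrite ?D1, ?D2, ?D3, ?D4, ?D5, ?D6, ?L1, ?L2, ?L3, ?L4 in h1;
    rewrite ?D1, ?D2, ?D3, ?D4, ?D5, ?D6, ?L1, ?L2, ?L3, ?L4 in h2;
    [left | left | right; left | right; left | right; right | right; right]; split; assumption.
Qed.

Lemma lift_bounded_of_edge_bounds (K tp tq tr : R) :
  0 < K -> tp <= tq -> tq <= tr -> edge_bounds K tp tq tr ->
  lift_bounded K (normal_slope p q r tp tq tr) (base_slope q r tq tr).
Proof.
  intros HK Hpq Hqr Hbounds.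
  set (a := normal_slope p q r tp tq tr). set (b := base_slope q r tq tr).
  set (l := base_len q r). set (h := dist_line p q r). set (xq := foot p q r q).
  set (dq := vnorm (vsub q p)). set (dr := vnorm (vsub r p)).
  pose proof base_len_pos as Hl. pose proof height_pos as Hh. fold l h in Hl, Hh.
  destruct cross_edges_base as [Hcq Hcr].
  assert (Hdq : dq ^ 2 = xq ^ 2 + h ^ 2) by exact (edge_len_sq q Hcq).
  assert (Hdr : dr ^ 2 = (xq + l) ^ 2 + h ^ 2)
    by (unfold xq, l; rewrite <- foot_r; exact (edge_len_sq r Hcr)).
  assert (Hdq0 : 0 <= dq) by apply sqrt_pos.
  assert (Hdr0 : 0 <= dr) by apply sqrt_pos.
  assert (Hbl : tr - tq = b * l) by (unfold b, base_slope; fold l; field; lra).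
  assert (Hb0 : 0 <= b) by (apply (Rmult_le_reg_r l); lra).
  assert (Hbeta : tq - tp = b * xq - a * h)
    by (unfold a, normal_slope; fold b xq h; field; lra).
  assert (HS : K * Rabs (area2 p q r) = K * l * h)
    by (rewrite area2_base_height; fold l h; ring).
  unfold edge_bounds in Hbounds. rewrite HS in Hbounds. fold l dq dr in Hbounds.
  destruct Hbounds as [[H1 H2]|[[H1 H2]|[H1 H2]]].
  - apply (lift_bounded_apex K h l xq dq dr a b (tq - tp) (tr - tp)); lra.
  - apply (lift_bounded_side K h xq dq a b (tq - tp)); try lra.
    + split; [lra|]. apply (Rmult_le_reg_r l); lra.
    + apply (Rmult_le_reg_r l); [lra|]. rewrite Hbl in H2. lra.
  - apply (lift_bounded_side K h (xq + l) dr a b (tr - tp)); try lra.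
    + split; [lra|]. apply (Rmult_le_reg_r l); lra.
    + apply (Rmult_le_reg_r l); [lra|]. rewrite Hbl in H2. lra.
Qed.

End Frame.

Theorem mainTheorem7 (eps f sigma : R) (p q r : pt) (tp tq tr : R) :
  0 < eps -> eps < f -> f < (1 + eps) / 2 -> (1 + eps) / 2 < 1 ->
  0 < sigma ->
  area2 p q r <> 0 ->
  tp <= tq -> tq <= tr ->
  vnorm (grad p q r tp tq tr) < sigma ->
  progress_some_designation eps f sigma p q r tp tq tr ->
  forall delta : R,
    0 <= delta -> delta <= eps * sigma * dist_line p q r ->
    vnorm (grad p q r (tp + delta) tq tr) < sigma.
Proof.
  intros Heps Hef Hf Hf1 Hs HD Hpq Hqr Hg Hprog delta Hd0 Hd1.
  set (K := (1 - eps) * sigma).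
  assert (HK : 0 < K) by (unfold K; nra).
  assert (Hsigma : sigma = K + eps * sigma) by (unfold K; ring).
  pose proof (height_pos p q r HD) as Hh.
  assert (Hlift : lift_bounded K (normal_slope p q r tp tq tr) (base_slope q r tq tr)).
  { apply (lift_bounded_of_edge_bounds p q r HD); try assumption.
    exact (designation_edge_bounds p q r HD eps f sigma tp tq tr Hs Hpq Hqr Hprog). }
  apply (vnorm_lt_iff _ _ Hs) in Hg. apply (vnorm_lt_iff _ _ Hs).
  rewrite grad_norm_frame in Hg |- * by exact HD. rewrite normal_slope_raise by exact HD.
  rewrite Hsigma in Hg |- *.
  apply (lift_within K (eps * sigma)); try assumption.
  split.
  - unfold Rdiv. apply Rmult_le_pos; [lra|]. apply Rlt_le, Rinv_0_lt_compat; lra.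
  - apply (Rmult_le_reg_r (dist_line p q r)); [lra|]. field_simplify; lra.
Qed.
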